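(* The problem \textsc{Diameter} is $2$-GP-hard with respect to the combined parameter ``bisection width plus minimum degree''. That is, there is an algorithm that, given any undirected connected unweighted graph $G$ (with $n$ vertices and $m$ edges) and integer $t$, runs in $O(n+m)$ time and outputs an undirected connected unweighted graph $G'$ and integer $t'$ such that $d(G)\ge t$ if and only if $d(G')\ge t'$, the size of $(G',t')$ is $O(n+m)$, and the bisection width of $G'$ plus the minimum degree of $G'$ is at most $2$.
   Context: \textsc{Diameter}: given an undirected, connected, unweighted graph $G$, compute its diameter $d(G)$, the length of a longest shortest path; its decision version asks, given $G$ and integer $t$, whether $d(G)\ge t$. A parameterized problem $P$ with associated unparameterized problem $\hat P$ is $\ell$-GP-hard if there is an algorithm transforming any instance $I$ of $\hat P$ into an instance $(I',k')$ of $P$ in time linear in $|I|$, such that $I\in\hat P\iff (I',k')\in P$, $k'\le\ell$, and $|I'|\in O(|I|)$. The bisection width of a graph is the minimum number of edges to delete in order to partition its vertex set into two parts whose sizes differ by at most one with no edges between them. *)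

From mathcomp Require Import all_boot.
Set Implicit Arguments. Unset Strict Implicit. Unset Printing Implicit Defensive.

(* Graphs: vertices 0..gn-1, edges as a list of (unordered) pairs.    *)
Record graph := Graph { gn : nat; gE : seq (nat * nat) }.

Definition gm (G : graph) : nat := size (gE G).

Definition adj (G : graph) (u v : nat) : bool :=
  ((u, v) \in gE G) || ((v, u) \in gE G).

Definition simple_graph (G : graph) : bool :=
  all (fun e => [&& e.1 < gn G, e.2 < gn G & e.1 != e.2]) (gE G)
  && uniq [seq (minn e.1 e.2, maxn e.1 e.2) | e <- gE G].

Fixpoint reach (G : graph) (k : nat) (u v : nat) : bool :=
  match k with
  | 0 => u == v
  | k'.+1 => reach G k' u v
             || has (fun w => reach G k' u w && adj G w v) (iota 0 (gn G))
  end.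

(* connected (and nonempty): every pair is joined by a walk; a walk can
   always be shortened to length < gn G *)
Definition connected (G : graph) : Prop :=
  0 < gn G /\ forall u v, u < gn G -> v < gn G -> reach G (gn G) u v.

(* shortest-path distance (the least k with a walk of length <= k);
   equals gn G if unreachable, which never happens in connected graphs *)
Definition dist (G : graph) (u v : nat) : nat :=
  find (fun k => reach G k u v) (iota 0 (gn G)).

Definition diameter (G : graph) : nat :=
  \max_(u < gn G) \max_(v < gn G) dist G u v.

Definition degree (G : graph) (v : nat) : nat :=
  count (adj G v) (iota 0 (gn G)).

Definition min_degree (G : graph) : nat :=
  \big[minn/gn G]_(v < gn G) degree G v.

Definition balanced (G : graph) (A : {set 'I_(gn G)}) : bool :=
  (#|A| == (gn G)./2) || (#|A| == uphalf (gn G)).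

Definition inA (G : graph) (A : {set 'I_(gn G)}) (x : nat) : bool :=
  [exists i in A, val i == x].

Definition cut (G : graph) (A : {set 'I_(gn G)}) : nat :=
  count (fun e => inA A e.1 != inA A e.2) (gE G).

(* bisection width: minimum number of crossing edges over balanced
   bipartitions (a balanced A always exists; gm G is a mere upper bound) *)
Definition bisection_width (G : graph) : nat :=
  \big[minn/gm G]_(A : {set 'I_(gn G)} | balanced A) cut A.

(* Machine model: unit-cost RAM with addition, truncated subtraction, *)
(* direct/indirect addressing and conditional jumps; word size bounded *)
(* by W (writing a value > W is a fault).                              *)
Inductive instr :=
  | ICONST of nat & nat
  | IADD of nat & nat & nat
  | ISUB of nat & nat & nat
  | ILOAD of nat & nat
  | ISTORE of nat & nat
  | IJZ of nat & nat
  | IHALT.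

Definition memory := nat -> nat.

Definition upd (M : memory) (a x : nat) : memory := fun i => if i == a then x else M i.

Inductive outcome := OHalt | OFault | ONext of nat & memory.

Definition write (W : nat) (pc : nat) (M : memory) (a x : nat) : outcome :=
  if x <= W then ONext pc.+1 (upd M a x) else OFault.

Definition step (W : nat) (P : seq instr) (pc : nat) (M : memory) : outcome :=
  match nth IHALT P pc with
  | ICONST a k => write W pc M a k
  | IADD a b c => write W pc M a (M b + M c)
  | ISUB a b c => write W pc M a (M b - M c)
  | ILOAD a b => write W pc M a (M (M b))
  | ISTORE a b => write W pc M (M a) (M b)
  | IJZ a l => if M a == 0 then ONext l M else ONext pc.+1 M
  | IHALT => OHalt
  end.

(* run W P fuel pc M = Some M' iff P halts (executing at most fuel
   instructions, the halt included) without fault, with final memory M' *)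
Fixpoint run (W : nat) (P : seq instr) (fuel pc : nat) (M : memory) : option memory :=
  match fuel with
  | 0 => None
  | f.+1 => match step W P pc M with
            | OHalt => Some M
            | OFault => None
            | ONext pc' M' => run W P f pc' M'
            end
  end.

(* Encoding of an instance (G, t): M[0]=n, M[1]=m, M[2]=t, and the i-th
   edge (u,v) at M[3+2i]=u, M[4+2i]=v; everything else 0. *)
Definition init_mem (G : graph) (t : nat) : memory := fun i =>
  if i == 0 then gn G else if i == 1 then gm G else if i == 2 then t
  else let j := i - 3 in
       if j./2 < gm G then
         let e := nth (0, 0) (gE G) j./2 in if odd j then e.2 else e.1
       else 0.

Definition decode_graph (M : memory) : graph :=
  Graph (M 0) [seq (M (3 + 2 * i), M (4 + 2 * i)) | i <- iota 0 (M 1)].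
Definition decode_t (M : memory) : nat := M 2.

(* Keep G and hang a path of length two below every vertex j (through n + j
   to 2n + j), then attach a star with centre 3n to vertex 0 and leaves
   3n + 1, ..., 6n - 1.  Every new vertex is within distance 2 of its anchor in
   G, and potentials that change by at most one along each edge show that the
   ends 2n + u, 2n + v of the paths below a diametral pair are at distance
   d(G) + 4, so the diameter grows by exactly 4.  The star side
   {3n, ..., 6n - 1} is half of the vertices and is joined to the rest by the
   single edge (0, 3n), and its leaves have degree 1.  A RAM program with five
   working cells writes the 5n new edges behind the input in O(n + m) steps. *)

From mathcomp Require Import all_boot zify.
From Stdlib Require Import FunctionalExtensionality.
Set Implicit Arguments. Unset Strict Implicit. Unset Printing Implicit Defensive.

Lemma sub_in_count (T : eqType) (p q : pred T) (s : seq T) :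
  {in s, subpred p q} -> count p s <= count q s.
Proof.
move=> pq; rewrite -(@eq_in_count _ (predI q p)); first by apply: sub_count => x /andP [].
by move=> x /pq; rewrite /= /predI /=; case: (p x) => [->|]; rewrite ?andbF.
Qed.

Lemma bigmin_le (I : eqType) (r : seq I) (P : pred I) (F : I -> nat) x i0 :
  i0 \in r -> P i0 -> \big[minn/x]_(i <- r | P i) F i <= F i0.
Proof.
elim: r => [|y r IH] //; rewrite inE big_cons => /orP [/eqP <- | hi] hp.
  by rewrite hp geq_minl.
by case: (P y); [apply: leq_trans (geq_minr _ _) _|]; apply: IH.
Qed.

Lemma card_geq_ord N k : #|[set i : 'I_N | k <= i]| = N - k.
Proof.
transitivity (\sum_(k <= i < N) 1); last by rewrite sum_nat_const_nat muln1.
by rewrite big_geq_mkord -sum1_card; apply: eq_bigl => i; rewrite inE.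
Qed.

Section Walks.
Variable G : graph.

Lemma reachS k a b : reach G k a b -> reach G k.+1 a b.
Proof. by move=> /= ->. Qed.

Lemma reach_mono k k' a b : k <= k' -> reach G k a b -> reach G k' a b.
Proof.
by move=> /subnK <-; elim: (k' - k) => // d IH /IH; rewrite addSn; apply: reachS.
Qed.

Lemma reach_adj a b : a < gn G -> adj G a b -> reach G 1 a b.
Proof.
by move=> ha hab /=; apply/orP; right; apply/hasP; exists a; rewrite ?mem_iota ?eqxx.
Qed.

Lemma reach_trans i j a b c : reach G i a b -> reach G j b c -> reach G (i + j) a c.
Proof.
move=> hi; elim: j c => [|j IH] c /=; first by move/eqP => <-; rewrite addn0.
rewrite addnS /= => /orP [h | /hasP [w hw /andP [h1 h2]]]; first by rewrite IH.
by apply/orP; right; apply/hasP; exists w; rewrite ?IH.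
Qed.

Lemma reach_lipschitz (f : nat -> nat) k a b :
  (forall x y, adj G x y -> f y <= f x + 1) -> reach G k a b -> f b <= f a + k.
Proof.
move=> hf; elim: k b => [|k IH] b /=; first by move/eqP => ->; rewrite addn0.
move=> /orP [h | /hasP [w _ /andP [h1 h2]]]; first by have := IH _ h; lia.
by have := IH _ h1; have := hf _ _ h2; lia.
Qed.

Lemma reach_subgraph (H : graph) k a b : gn G <= gn H ->
  (forall x y, adj G x y -> adj H x y) -> reach G k a b -> reach H k a b.
Proof.
move=> hn hadj; elim: k b => [|k IH] b //=.
move=> /orP [h | /hasP [w hw /andP [h1 h2]]]; first by rewrite IH.
apply/orP; right; apply/hasP; exists w; last by rewrite IH ?hadj.
by move: hw; rewrite !mem_iota; lia.
Qed.

Lemma dist_le k u v : reach G k u v -> dist G u v <= k.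
Proof.
move=> h; rewrite /dist; have [hk | hk] := ltnP k (gn G).
  rewrite leqNgt; apply/negP => /(before_find 0).
  by rewrite nth_iota // add0n h.
by apply: leq_trans (find_size _ _) _; rewrite size_iota.
Qed.

Lemma dist_self u : dist G u u = 0.
Proof. by apply/eqP; rewrite -leqn0; apply: (@dist_le 0) => /=. Qed.

Lemma reach_dist k u v : reach G k u v -> k < gn G -> reach G (dist G u v) u v.
Proof.
move=> h hk; rewrite /dist.
have hh : has (fun k => reach G k u v) (iota 0 (gn G)).
  by apply/hasP; exists k; rewrite ?mem_iota.
have := nth_find 0 hh; rewrite nth_iota ?add0n //.
by move: hh; rewrite has_find size_iota.
Qed.

Lemma dist_le_diameter u v : u < gn G -> v < gn G -> dist G u v <= diameter G.
Proof.
move=> un vn; apply: leq_trans (leq_bigmax (Ordinal un)).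
exact: (leq_bigmax (F := fun v : 'I_(gn G) => dist G u v) (Ordinal vn)).
Qed.

End Walks.

Section Shortening.
Variables (G : graph) (u : nat).
Local Notation n := (gn G).

Definition ball k : {set 'I_n} := [set w : 'I_n | reach G k u w].

Lemma ball_eq i j : ball i = ball j <-> forall x, x < n -> reach G i u x = reach G j u x.
Proof.
split=> [e x xn | e]; last by apply/setP => w; rewrite !inE e.
by have /setP /(_ (Ordinal xn)) := e; rewrite !inE.
Qed.

Lemma ball_subS k : ball k \subset ball k.+1.
Proof. by apply/subsetP => w; rewrite !inE; apply: reachS. Qed.

Lemma ball_stable k : ball k.+1 = ball k -> forall j, ball (j + k) = ball k.
Proof.
move=> /ball_eq stable; elim=> // j /ball_eq IH; apply/ball_eq => x xn.
rewrite addSn -stable //= IH //; congr orb.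
by apply: eq_in_has => y; rewrite mem_iota => /andP [_ yn]; rewrite IH.
Qed.

(* Balls around [u] grow strictly until they stabilise, so they stabilise
   within [n - 1] steps. *)
Lemma reach_shorten k v : u < n -> v < n -> reach G k u v -> reach G n.-1 u v.
Proof.
move=> un vn ukv; have [kn | nk] := leqP k n.-1; first exact: reach_mono kn ukv.
case: (boolP [exists i : 'I_n.-1, ball i.+1 == ball i]).
  move=> /existsP [i /eqP /ball_stable /(_ (k - i)) /ball_eq e].
  have ik : i <= k by have := ltn_ord i; lia.
  rewrite subnK // in e.
  by apply: (@reach_mono _ i); [have := ltn_ord i; lia | rewrite -e].
move=> /existsPn growing.
have card_ball i : i <= n.-1 -> i < #|ball i|.
  elim: i => [_ | i IH lt_i].
    by rewrite card_gt0; apply/set0Pn; exists (Ordinal un); rewrite inE /= eqxx.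
  apply: leq_ltn_trans (IH (ltnW lt_i)) (proper_card _).
  by rewrite properEneq ball_subS andbT eq_sym; apply: (growing (Ordinal lt_i)).
have full : ball n.-1 = setT.
  apply/eqP; rewrite eqEcard subsetT cardsT card_ord.
  by have := card_ball _ (leqnn _); lia.
by have := in_setT (Ordinal vn); rewrite -full inE.
Qed.

End Shortening.

(* For j = n - 1 down to 0 the pendant edges (j, n + j) and (n + j, 2n + j),
   then the hub edge (0, 3n), then the leaf edges (3n, w) for w = 6n - 1 down
   to 3n + 1: the order in which [reduction_prog] writes them. *)
Definition gadget_edge n i : nat * nat :=
  if i < 2 * n then
    (if i %% 2 == 0 then (n - 1 - i %/ 2, 2 * n - 1 - i %/ 2)
     else (2 * n - 1 - i %/ 2, 3 * n - 1 - i %/ 2))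
  else if i == 2 * n then (0, 3 * n) else (3 * n, 8 * n - i).

Definition gadget_edges n := map (gadget_edge n) (iota 0 (5 * n)).

Definition reduce (G : graph) := Graph (6 * gn G) (gE G ++ gadget_edges (gn G)).

Definition gadget_index n (e : nat * nat) : nat :=
  let b := e.2 in
  if b < 2 * n then 2 * (2 * n - 1 - b) else if b < 3 * n then 2 * (3 * n - 1 - b) + 1
  else if b == 3 * n then 2 * n else 8 * n - b.

Ltac case_ifs := repeat (case: ifP => /=; let h := fresh "hif" in move=> h).

Lemma gadget_indexK n i : i < 5 * n -> gadget_index n (gadget_edge n i) = i.
Proof. by move=> hi; rewrite /gadget_edge; case_ifs; rewrite /gadget_index /=; case_ifs; lia. Qed.

Lemma gadget_edges_uniq n : uniq (gadget_edges n).
Proof.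
rewrite map_inj_in_uniq ?iota_uniq // => i j; rewrite !mem_iota !add0n => hi hj e.
by rewrite -(gadget_indexK hi) -(gadget_indexK hj) e.
Qed.

Lemma size_gadget_edges n : size (gadget_edges n) = 5 * n.
Proof. by rewrite size_map size_iota. Qed.

Lemma gadget_edge_in n i e : i < 5 * n -> gadget_edge n i = e -> e \in gadget_edges n.
Proof. by move=> hi <-; apply: map_f; rewrite mem_iota. Qed.

Lemma gadget_pendant1 n j : j < n -> (j, n + j) \in gadget_edges n.
Proof.
move=> hj; apply: (@gadget_edge_in _ (2 * (n - 1 - j))); first lia.
by rewrite /gadget_edge; case_ifs; try lia; congr pair; lia.
Qed.

Lemma gadget_pendant2 n j : j < n -> (n + j, 2 * n + j) \in gadget_edges n.
Proof.
move=> hj; apply: (@gadget_edge_in _ (2 * (n - 1 - j) + 1)); first lia.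
by rewrite /gadget_edge; case_ifs; try lia; congr pair; lia.
Qed.

Lemma gadget_hub n : 0 < n -> (0, 3 * n) \in gadget_edges n.
Proof.
move=> hn; apply: (@gadget_edge_in _ (2 * n)); first lia.
by rewrite /gadget_edge; case_ifs; try lia; congr pair; lia.
Qed.

Lemma gadget_leaf n w : 3 * n < w < 6 * n -> (3 * n, w) \in gadget_edges n.
Proof.
move=> hw; apply: (@gadget_edge_in _ (8 * n - w)); first lia.
by rewrite /gadget_edge; case_ifs; try lia; congr pair; lia.
Qed.

Lemma gadget_edgesP n a b : (a, b) \in gadget_edges n ->
  [\/ exists2 j, j < n & a = j /\ b = n + j,
      exists2 j, j < n & a = n + j /\ b = 2 * n + j,
      a = 0 /\ b = 3 * n |
      a = 3 * n /\ 3 * n < b < 6 * n].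
Proof.
move=> /mapP [i]; rewrite mem_iota add0n /gadget_edge => hi; case_ifs; move=> [-> ->].
- by constructor 1; exists (n - 1 - i %/ 2); lia.
- by constructor 2; exists (n - 1 - i %/ 2); lia.
- by constructor 3.
- by constructor 4; lia.
Qed.

Lemma gadget_edge_bounds n a b : 0 < n -> (a, b) \in gadget_edges n ->
  [/\ a < b, n <= b & b < 6 * n].
Proof.
by move=> ?; case/gadget_edgesP => [[j ? [-> ->]] | [j ? [-> ->]] | [-> ->] | [-> ?]]; split; lia.
Qed.

(* Vertex z of [reduce G] hangs [level n z] edges above the vertex
   [anchor n z] of G. *)
Definition anchor n z :=
  if z < n then z else if z < 2 * n then z - n else if z < 3 * n then z - 2 * n else 0.

Definition level n z :=
  if z < n then 0 else if z < 2 * n then 1 else if z < 3 * n then 2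
  else if z == 3 * n then 1 else 2.

Lemma gadget_edge_anchor n a b : 0 < n -> (a, b) \in gadget_edges n ->
  anchor n a = anchor n b /\ level n b = (level n a).+1.
Proof.
by move=> ?; case/gadget_edgesP => [[j ? [-> ->]] | [j ? [-> ->]] | [-> ->] | [-> ?]];
  rewrite /anchor /level; case_ifs; lia.
Qed.

Section Reduction.
Variable G : graph.
Hypothesis simpleG : simple_graph G.
Hypothesis connG : connected G.
Local Notation n := (gn G).
Local Notation G' := (reduce G).
Local Notation D := (diameter G).

Lemma gn_gt0 : 0 < n.
Proof. by case: connG. Qed.

Lemma edge_bounds a b : (a, b) \in gE G -> [/\ a < n, b < n & a != b].
Proof. by case/andP: simpleG => /allP h _ /h /and3P. Qed.

Lemma adj_bounds a b : adj G a b -> [/\ a < n, b < n & a != b].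
Proof. by case/orP => /edge_bounds [? ? ab]; split=> //; rewrite eq_sym. Qed.

Lemma adj_reduce a b :
  adj G' a b = [|| adj G a b, (a, b) \in gadget_edges n | (b, a) \in gadget_edges n].
Proof.
rewrite /adj /= !mem_cat.
by case: ((a, b) \in gE G); case: ((b, a) \in gE G); case: ((a, b) \in gadget_edges n).
Qed.

Lemma reach_reduce k a b : reach G k a b -> reach G' k a b.
Proof.
by apply: reach_subgraph => [/= | x y ?]; [lia | rewrite adj_reduce; apply/orP; left].
Qed.

Lemma reach_gadget a b : (a, b) \in gadget_edges n -> reach G' 1 a b /\ reach G' 1 b a.
Proof.
move=> e; have [ab _ b6] := gadget_edge_bounds gn_gt0 e.
by split; apply: reach_adj; rewrite ?adj_reduce ?e ?orbT //=; lia.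
Qed.

Lemma reduce_lipschitz (f : nat -> nat) :
  (forall a b, adj G a b -> f b <= f a + 1) ->
  (forall a b, (a, b) \in gadget_edges n -> f b <= f a + 1 /\ f a <= f b + 1) ->
  forall a b, adj G' a b -> f b <= f a + 1.
Proof. by move=> fG fgad a b; rewrite adj_reduce => /or3P [/fG | /fgad [] | /fgad []]. Qed.

Lemma anchor_lt z : anchor n z < n.
Proof. by have := gn_gt0; rewrite /anchor; case_ifs; lia. Qed.

Lemma reach_anchor z : z < 6 * n -> reach G' 2 (anchor n z) z /\ reach G' 2 z (anchor n z).
Proof.
move=> hz; have hn := gn_gt0.
have edge2 x y : (x, y) \in gadget_edges n -> reach G' 2 x y /\ reach G' 2 y x.
  by move=> /reach_gadget [? ?]; split; apply: reachS.
have path2 x y w : (x, y) \in gadget_edges n -> (y, w) \in gadget_edges n ->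
    reach G' 2 x w /\ reach G' 2 w x.
  move=> /reach_gadget [xy yx] /reach_gadget [yw wy].
  by split; [apply: (reach_trans xy yw) | apply: (reach_trans wy yx)].
have [z_n | n_z] := ltnP z n.
  by rewrite /anchor z_n; split; apply: (@reach_mono _ 0) => //=.
have [z_2n | n2_z] := ltnP z (2 * n).
  have [j j_n ->] : exists2 j, j < n & z = n + j by exists (z - n); lia.
  have -> : anchor n (n + j) = j by rewrite /anchor; case_ifs; lia.
  exact/edge2/gadget_pendant1.
have [z_3n | n3_z] := ltnP z (3 * n).
  have [j j_n ->] : exists2 j, j < n & z = 2 * n + j by exists (z - 2 * n); lia.
  have -> : anchor n (2 * n + j) = j by rewrite /anchor; case_ifs; lia.
  by apply: (path2 _ (n + j)); [apply: gadget_pendant1 | apply: gadget_pendant2].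
have -> : anchor n z = 0 by rewrite /anchor; case_ifs; lia.
have [-> | ne3] := eqVneq z (3 * n); first exact/edge2/gadget_hub.
by apply: (path2 _ (3 * n)); [apply: gadget_hub | apply: gadget_leaf; lia].
Qed.

Lemma dist_reach_lt u v : u < n -> v < n -> reach G (dist G u v) u v /\ dist G u v < n.
Proof.
move=> un vn; have hn := gn_gt0.
have r : reach G n.-1 u v := reach_shorten un vn (connG.2 u v un vn).
split; first by apply: (reach_dist r); lia.
by have := dist_le r; lia.
Qed.

Lemma diameter_lt : D < n.
Proof.
have hn := gn_gt0; suff : D <= n.-1 by lia.
apply/bigmax_leqP => u _; apply/bigmax_leqP => v _.
by have [_ ?] := dist_reach_lt (ltn_ord u) (ltn_ord v); lia.
Qed.

Lemma dist_adj u x y : u < n -> adj G x y -> dist G u y <= dist G u x + 1.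
Proof.
move=> un xy; have [xn _ _] := adj_bounds xy.
have [r _] := dist_reach_lt un xn.
by apply: dist_le; apply: reach_trans r _; apply: reach_adj.
Qed.

Lemma diameter_attained : exists2 u, u < n & exists2 v, v < n & dist G u v = D.
Proof.
have i0 := Ordinal gn_gt0.
rewrite /diameter (bigmax_eq_arg i0) // (bigmax_eq_arg i0) //.
by eexists; [|eexists].
Qed.

Lemma reach_reduce_diameter a b : a < 6 * n -> b < 6 * n -> reach G' (2 + D + 2) a b.
Proof.
move=> ha hb; have [_ ra] := reach_anchor ha; have [rb _] := reach_anchor hb.
have [r _] := dist_reach_lt (anchor_lt a) (anchor_lt b).
apply: reach_trans rb; apply: reach_trans ra _; apply: reach_reduce.
exact: reach_mono (dist_le_diameter (anchor_lt a) (anchor_lt b)) r.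
Qed.

Lemma pendant_leaf_far k : reach G' k (2 * n) (3 * n + 1) -> 4 <= k.
Proof.
have hn := gn_gt0.
pose f z := if z < 3 * n then 2 - level n z else level n z + 2.
have fG a b : adj G a b -> f b <= f a + 1.
  by case/adj_bounds => an bn _; rewrite /f /level; case_ifs; lia.
have fgad a b : (a, b) \in gadget_edges n -> f b <= f a + 1 /\ f a <= f b + 1.
  case/gadget_edgesP => [[j ? [-> ->]] | [j ? [-> ->]] | [-> ->] | [-> ?]];
  by rewrite /f /level; case_ifs; lia.
by move/(reach_lipschitz (reduce_lipschitz fG fgad)); rewrite /f /level; case_ifs; lia.
Qed.

Lemma pendant_ends_far u v k : u < n -> v < n -> u != v ->
  reach G' k (2 * n + u) (2 * n + v) -> dist G u v + 4 <= k.
Proof.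
move=> un vn uv.
pose g z := if anchor n z == u then 2 - level n z else 2 + dist G u (anchor n z) + level n z.
have gG a b : adj G a b -> g b <= g a + 1.
  move=> ab; have [an bn _] := adj_bounds ab; have := dist_adj un ab.
  rewrite /g /anchor /level an bn; have := dist_self G u.
  by case: eqP => [-> | _]; case: eqP => [-> | _]; lia.
have ggad a b : (a, b) \in gadget_edges n -> g b <= g a + 1 /\ g a <= g b + 1.
  move=> /(gadget_edge_anchor gn_gt0) [ab lab]; rewrite /g ab.
  have : level n a <= 2 by rewrite /level; case_ifs; lia.
  by case: (anchor n b == u); lia.
move/(reach_lipschitz (reduce_lipschitz gG ggad)); rewrite /g.
have -> : anchor n (2 * n + u) = u by rewrite /anchor; case_ifs; lia.
have -> : anchor n (2 * n + v) = v by rewrite /anchor; case_ifs; lia.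
by rewrite eqxx eq_sym (negbTE uv) /level; case_ifs; lia.
Qed.

Lemma diameter_reduce : diameter G' = D + 4.
Proof.
have hn := gn_gt0; have hD := diameter_lt.
apply/eqP; rewrite eqn_leq; apply/andP; split.
  apply/bigmax_leqP => a _; apply/bigmax_leqP => b _.
  by have := dist_le (reach_reduce_diameter (ltn_ord a) (ltn_ord b)); lia.
have [a [b [ha hb far]]] : exists a b,
    [/\ a < 6 * n, b < 6 * n & forall k, reach G' k a b -> D + 4 <= k].
  have [-> | D_gt0] := posnP D.
    by exists (2 * n), (3 * n + 1); split; [lia | lia | apply: pendant_leaf_far].
  have [u un [v vn uvD]] := diameter_attained.
  have uv : u != v by apply: contra_eqN uvD => /eqP ->; rewrite dist_self; lia.
  exists (2 * n + u), (2 * n + v); split; [lia | lia | move=> k].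
  by rewrite -uvD; apply: pendant_ends_far.
apply: leq_trans (far _ (reach_dist (reach_reduce_diameter ha hb) _)) _; first by rewrite /=; lia.
exact: dist_le_diameter.
Qed.

Lemma connected_reduce : connected G'.
Proof.
have hn := gn_gt0; have hD := diameter_lt.
split=> [/= | a b ha hb]; first lia.
by apply: reach_mono (reach_reduce_diameter ha hb) => /=; lia.
Qed.

Lemma simple_reduce : simple_graph G'.
Proof.
have hn := gn_gt0; case/andP: simpleG => _ uniqG.
apply/andP; split.
  apply/allP => -[a b]; rewrite mem_cat => /orP [/edge_bounds | /(gadget_edge_bounds hn)] [? ? ?];
  by apply/and3P; split => /=; lia.
rewrite map_cat cat_uniq uniqG /=.
have -> : [seq (minn e.1 e.2, maxn e.1 e.2) | e <- gadget_edges n] = gadget_edges n.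
  rewrite -[RHS]map_id; apply/eq_in_map => -[a b] /(gadget_edge_bounds hn) [ab _ _] /=.
  by congr pair; lia.
rewrite gadget_edges_uniq andbT; apply/hasPn => -[a b] /(gadget_edge_bounds hn) [_ nb _].
by apply/negP => /mapP [[x y] /edge_bounds [xn yn _] [_ /= eb]]; lia.
Qed.

Lemma min_degree_reduce : min_degree G' <= 1.
Proof.
have hn := gn_gt0; have leaf : 3 * n + 1 < 6 * n by lia.
have nbr b : adj G' (3 * n + 1) b -> b = 3 * n.
  rewrite adj_reduce => /or3P [/adj_bounds [] | /gadget_edgesP | /gadget_edgesP]; try lia;
  by case=> [[j ? [? ?]] | [j ? [? ?]] | [? ?] | [? ?]]; lia.
apply: leq_trans (bigmin_le _ _ (i0 := Ordinal leaf) (mem_index_enum _) (erefl true)) _.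
apply: leq_trans (sub_in_count (q := pred1 (3 * n)) _) _ => [b _ /nbr -> /= |]; first exact: eqxx.
by rewrite count_uniq_mem ?iota_uniq //; case: (_ \in _).
Qed.

Definition star_side : {set 'I_(gn G')} := [set i : 'I_(gn G') | 3 * n <= i].

Lemma inA_star_side x : inA star_side x = (3 * n <= x < 6 * n).
Proof.
apply/existsP/andP => [[i /andP [hi /eqP <-]] | [h1 h2]].
  by move: hi; rewrite inE => ->; split => //; apply: (ltn_ord i).
by exists (Ordinal (h2 : x < gn G')); rewrite inE /= h1 eqxx.
Qed.

Lemma bisection_width_reduce : bisection_width G' <= 1.
Proof.
have hn := gn_gt0.
have bal : balanced star_side by rewrite /balanced /star_side card_geq_ord /=; lia.
apply: leq_trans (bigmin_le _ _ (i0 := star_side) (mem_index_enum _) bal) _.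
rewrite /cut /= count_cat (@eq_in_count _ _ pred0 (gE G)) ?count_pred0 => [|[a b]]; last first.
  by move=> /edge_bounds [? ? _]; rewrite /= !inA_star_side; lia.
apply: leq_trans (sub_in_count (q := pred1 (0, 3 * n)) _) _.
  move=> [a b] /gadget_edgesP + /=; rewrite !inA_star_side.
  by case=> [[j ? [-> ->]] | [j ? [-> ->]] | [-> ->] | [-> ?]]; rewrite xpair_eqE; lia.
by rewrite count_uniq_mem ?gadget_edges_uniq //; case: (_ \in _).
Qed.

End Reduction.

(* Cells 0-4 serve as registers; initially they hold n, m, t and the first
   input edge (s3, s4).  With E := 3 + 2m + 10n the gadget edges fill cells
   3 + 2m, ..., E - 1, right behind the input edges.  [decode_graph] never
   reads the cells from E on: the setup block stores s3, s4 at E + 1, E + 2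
   and the output header 6n, t + 4, m + 5n at E + 3, 2E, 2E + 3 (with the
   pointer E + 3 at E), after stashing m, s3, s4 at T, T + n, T + 2n,
   T := t + 2m + 20n, to free registers; the restore block reloads them.
   If m = 0 then n = 1 and the fixed output is written directly.  Jump targets
   are absolute: the blocks start at 0, 112, 127, 135, 145 and 157. *)
Definition setup_code : seq instr :=
  [:: IJZ 1 157] ++ nseq 2 (IADD 2 2 1) ++ nseq 20 (IADD 2 2 0) ++
  [:: ISTORE 2 1; IADD 1 2 0; ISTORE 1 3; IADD 1 1 0; ISTORE 1 4; ICONST 4 3; ILOAD 1 2] ++
  nseq 2 (IADD 4 4 1) ++ nseq 10 (IADD 4 4 0) ++
  [:: ICONST 1 1; IADD 3 2 0; ILOAD 3 3; IADD 4 4 1; ISTORE 4 3;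
      IADD 3 2 0; IADD 3 3 0; ILOAD 3 3; IADD 4 4 1; ISTORE 4 3; IADD 4 4 1; IADD 3 0 0] ++
  nseq 4 (IADD 3 3 0) ++ [:: ISTORE 4 3; ISUB 3 4 1] ++ nseq 2 (ISUB 3 3 1) ++
  [:: ISTORE 3 4; ILOAD 1 2] ++ nseq 2 (ISUB 2 2 1) ++ nseq 20 (ISUB 2 2 0) ++
  [:: ICONST 4 4; IADD 2 2 4] ++ nseq 5 (IADD 1 1 0) ++
  [:: IADD 4 3 3; ISTORE 4 2; ICONST 2 3; IADD 4 4 2; ISTORE 4 1; ISUB 2 3 0] ++
  nseq 9 (ISUB 2 2 0) ++ [:: ICONST 4 1; ISUB 1 0 4; IADD 3 1 0; IADD 0 3 0].

Definition pendant_loop : seq instr :=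
  [:: ICONST 4 1; ISTORE 2 1; IADD 2 2 4; ISTORE 2 3; IADD 2 2 4; ISTORE 2 3; IADD 2 2 4;
      ISTORE 2 0; IADD 2 2 4; IJZ 1 127; ISUB 1 1 4; ISUB 3 3 4; ISUB 0 0 4; ISUB 4 4 4;
      IJZ 4 112].

Definition hub_code : seq instr :=
  [:: ISTORE 2 1; IADD 2 2 4; IADD 3 3 0; ISTORE 2 3; IADD 2 2 4; IADD 1 3 3; ISUB 1 1 4;
      ISUB 0 3 4].

Definition leaf_loop : seq instr :=
  [:: ICONST 4 1; ISTORE 2 3; IADD 2 2 4; ISTORE 2 1; IADD 2 2 4; ISUB 0 0 4; IJZ 0 145;
      ISUB 1 1 4; ISUB 4 4 4; IJZ 4 135].

Definition restore_code : seq instr :=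
  [:: ICONST 3 1; IADD 0 2 3; IADD 4 0 3; ILOAD 4 4; ILOAD 3 0; ILOAD 0 2; IADD 1 2 0;
      ILOAD 1 1; ILOAD 0 0; IADD 2 2 2; ILOAD 2 2; IHALT].

Definition single_vertex_code : seq instr :=
  [:: ICONST 3 0; ICONST 4 1; ICONST 5 1; ICONST 6 2; ICONST 7 0; ICONST 8 3; ICONST 9 3;
      ICONST 10 5; ICONST 11 3; ICONST 12 4; ICONST 0 6; ICONST 1 5; ICONST 13 4;
      IADD 2 2 13; IHALT].

Definition reduction_prog : seq instr :=
  setup_code ++ pendant_loop ++ hub_code ++ leaf_loop ++ restore_code ++ single_vertex_code.

Fixpoint steps (W : nat) (P : seq instr) (k pc : nat) (M : memory) : option (nat * memory) :=
  if k is k'.+1 then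
    if step W P pc M is ONext pc' M' then steps W P k' pc' M' else None
  else Some (pc, M).

Lemma steps0 W P pc M : steps W P 0 pc M = Some (pc, M).
Proof. by []. Qed.

Lemma stepsS W P k pc M : steps W P k.+1 pc M =
  if step W P pc M is ONext pc' M' then steps W P k pc' M' else None.
Proof. by []. Qed.

Lemma stepsD W P a b pc M : steps W P (a + b) pc M =
  if steps W P a pc M is Some (pc', M') then steps W P b pc' M' else None.
Proof. by elim: a pc M => [|a IH] pc M //=; case: (step W P pc M) => // pc' M'; apply: IH. Qed.

Lemma run_steps W P k fuel pc M pc' M' :
  steps W P k pc M = Some (pc', M') -> nth IHALT P pc' = IHALT -> k < fuel ->
  run W P fuel pc M = Some M'.
Proof.
elim: k fuel pc M => [|k IH] [|f] pc M //=; first by move=> [<- <-] h _; rewrite /step h.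
by case: (step W P pc M) => // pc1 M1 hs hh hk; apply: IH hs hh hk.
Qed.

Arguments steps : simpl never.
Arguments step : simpl never.

Definition regmem (r0 r1 r2 r3 r4 : nat) (h : memory) : memory := fun a =>
  match a with 0 => r0 | 1 => r1 | 2 => r2 | 3 => r3 | 4 => r4 | _ => h a end.

Section RegisterMemory.
Variables (r0 r1 r2 r3 r4 x : nat) (h : memory).

Lemma regmem0 : regmem r0 r1 r2 r3 r4 h 0 = r0. Proof. by []. Qed.
Lemma regmem1 : regmem r0 r1 r2 r3 r4 h 1 = r1. Proof. by []. Qed.
Lemma regmem2 : regmem r0 r1 r2 r3 r4 h 2 = r2. Proof. by []. Qed.
Lemma regmem3 : regmem r0 r1 r2 r3 r4 h 3 = r3. Proof. by []. Qed.
Lemma regmem4 : regmem r0 r1 r2 r3 r4 h 4 = r4. Proof. by []. Qed.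

Lemma regmem_high a : 4 < a -> regmem r0 r1 r2 r3 r4 h a = h a.
Proof. by case: a => [|[|[|[|[|a]]]]]. Qed.

Ltac regmem_ext := apply: functional_extensionality => -[|[|[|[|[|b]]]]].

Lemma upd_regmem0 : upd (regmem r0 r1 r2 r3 r4 h) 0 x = regmem x r1 r2 r3 r4 h.
Proof. by regmem_ext. Qed.
Lemma upd_regmem1 : upd (regmem r0 r1 r2 r3 r4 h) 1 x = regmem r0 x r2 r3 r4 h.
Proof. by regmem_ext. Qed.
Lemma upd_regmem2 : upd (regmem r0 r1 r2 r3 r4 h) 2 x = regmem r0 r1 x r3 r4 h.
Proof. by regmem_ext. Qed.
Lemma upd_regmem3 : upd (regmem r0 r1 r2 r3 r4 h) 3 x = regmem r0 r1 r2 x r4 h.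
Proof. by regmem_ext. Qed.
Lemma upd_regmem4 : upd (regmem r0 r1 r2 r3 r4 h) 4 x = regmem r0 r1 r2 r3 x h.
Proof. by regmem_ext. Qed.

Lemma upd_regmem_high a : 4 < a ->
  upd (regmem r0 r1 r2 r3 r4 h) a x = regmem r0 r1 r2 r3 r4 (upd h a x).
Proof. by move=> ha; regmem_ext; rewrite /upd /=; case: eqP => // e; move: ha; rewrite -e. Qed.

End RegisterMemory.

Lemma updE (M : memory) a x b : upd M a x b = if b == a then x else M b.
Proof. by []. Qed.

Arguments upd : simpl never.

Lemma write_ok W pc M a x : x <= W -> write W pc M a x = ONext pc.+1 (upd M a x).
Proof. by rewrite /write => ->. Qed.

Lemma addn_mul2 x n : x + n + n = x + 2 * n. Proof. lia. Qed.
Lemma addn_mulS x k n : x + k * n + n = x + k.+1 * n. Proof. lia. Qed.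
Lemma subn_mul2 x n : x - n - n = x - 2 * n. Proof. lia. Qed.
Lemma subn_mulS x k n : x - k * n - n = x - k.+1 * n. Proof. lia. Qed.

Ltac collect_multiples :=
  repeat first [rewrite addn_mulS | rewrite addn_mul2 | rewrite subn_mulS | rewrite subn_mul2].

Ltac decide_eqs := repeat match goal with
  | |- context [?a == ?b] =>
      (rewrite (_ : (a == b) = true); last by apply/eqP; lia) ||
      (rewrite (_ : (a == b) = false); last by apply/negbTE; apply/eqP; lia)
  end.

Ltac read_high := repeat match goal with
  | |- context [regmem ?r0 ?r1 ?r2 ?r3 ?r4 ?h ?a] =>
      rewrite (@regmem_high r0 r1 r2 r3 r4 h a); last lia
  end.

Ltac push_upd :=
  repeat first [ rewrite upd_regmem0 | rewrite upd_regmem1 | rewrite upd_regmem2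
               | rewrite upd_regmem3 | rewrite upd_regmem4 | (rewrite upd_regmem_high; last lia)].

(* Symbolic execution of one instruction on a goal [steps W P k.+1 pc M = _]
   with [M] of the form [regmem ...]: fetch the instruction, evaluate reads
   (after [read_tac], which rewrites reads of unknown cells), decide the
   equality tests and the word-size check with [lia] (using [hW], a bound of
   the form [x <= _ -> x <= W]), and normalise the new memory. *)
Ltac exec_step_with hW read_tac :=
  rewrite stepsS;
  match goal with |- context [step ?W ?P ?pc ?M] =>
    let i := eval vm_compute in (nth IHALT P pc) in
    rewrite /step (_ : nth IHALT P pc = i); last reflexivity
  end;
  cbv iota beta;
  rewrite ?regmem0 ?regmem1 ?regmem2 ?regmem3 ?regmem4; collect_multiples; read_high;
  rewrite ?updE; read_tac; decide_eqs; cbv iota beta;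
  try (rewrite write_ok; last (apply: hW; lia));
  cbv iota beta; push_upd; collect_multiples.

Ltac exec_step hW := exec_step_with hW idtac.

Definition gadget_cell n o :=
  if o %% 2 == 0 then (gadget_edge n (o %/ 2)).1 else (gadget_edge n (o %/ 2)).2.

Lemma gadget_cell_even n i : gadget_cell n (2 * i) = (gadget_edge n i).1.
Proof. by rewrite /gadget_cell (_ : (2 * i) %% 2 = 0) ?(mulKn i (isT : 0 < 2)) //; lia. Qed.

Lemma gadget_cell_odd n i : gadget_cell n (2 * i + 1) = (gadget_edge n i).2.
Proof.
rewrite /gadget_cell; have -> : (2 * i + 1) %/ 2 = i by lia.
by rewrite (_ : (2 * i + 1) %% 2 = 1) //; lia.
Qed.

Section MainCase.
Variables (W n m t : nat).
Hypothesis hW : forall x, x <= 25 * (n + m + t + 2) -> x <= W.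
Hypothesis n_ge2 : 2 <= n.
Hypothesis m_gt0 : 0 < m.
Local Notation P0 := (3 + 2 * m).
Local Notation E := (3 + 2 * m + 10 * n).

Lemma setup_spec s3 s4 h : s3 < n -> s4 < n -> exists h',
  steps W reduction_prog 112 0 (regmem n m t s3 s4 h) =
    Some (112, regmem (3 * n - 1) (n - 1) P0 (2 * n - 1) 1 h') /\
  [/\ forall a, 4 < a -> a < E -> h' a = h a,
      h' E = E + 3, h' (E + 1) = s3, h' (E + 2) = s4 &
      [/\ h' (E + 3) = 6 * n, h' (2 * E) = t + 4 & h' (2 * E + 3) = m + 5 * n]].
Proof.
move=> s3n s4n; do 112 exec_step hW.
eexists; split; first by congr (Some (_, regmem _ _ _ _ _ _)); lia.
by split; [move=> a ha1 ha2| | | |split]; rewrite ?updE; decide_eqs; lia.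
Qed.

Variable hA : memory.

Definition written k (h : memory) := forall a, 4 < a ->
  h a = if (P0 <= a) && (a < P0 + k) then gadget_cell n (a - P0) else hA a.

(* The registers are given by equations so that the induction hypothesis
   applies to the symbolically computed state. *)
Lemma pendant_loop_spec d : forall r z x p y q h, r + d = n - 1 ->
  z = 3 * n - 1 - r -> x = n - 1 - r -> p = P0 + 4 * r -> y = 2 * n - 1 - r ->
  written (4 * r) h ->
  exists h', steps W reduction_prog (15 * d + 10) 112 (regmem z x p y q h) =
     Some (127, regmem (2 * n) 0 (P0 + 4 * n) n 1 h') /\ written (4 * n) h'.
Proof.
elim: d => [|d IH] r z x p y q h rd -> -> -> -> wr.
  do 10 exec_step hW.
  eexists; split; first by congr (Some (_, regmem _ _ _ _ _ _)); lia.
  by move=> a ha; rewrite !updE wr //; rewrite /gadget_cell /gadget_edge; case_ifs; lia.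
rewrite (_ : 15 * d.+1 + 10 = 15 + (15 * d + 10)) ?stepsD; last lia.
do 15 exec_step hW; rewrite steps0.
apply: (IH r.+1); try lia.
by move=> a ha; rewrite !updE wr //; rewrite /gadget_cell /gadget_edge; case_ifs; lia.
Qed.

Lemma hub_spec h : written (4 * n) h -> exists h',
  steps W reduction_prog 8 127 (regmem (2 * n) 0 (P0 + 4 * n) n 1 h) =
    Some (135, regmem (3 * n - 1) (6 * n - 1) (P0 + 4 * n + 2) (3 * n) 1 h') /\
  written (4 * n + 2) h'.
Proof.
move=> wr; do 8 exec_step hW.
eexists; split; first by rewrite steps0; congr (Some (_, regmem _ _ _ _ _ _)); lia.
by move=> a ha; rewrite !updE wr //; rewrite /gadget_cell /gadget_edge; case_ifs; lia.
Qed.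

Lemma leaf_loop_spec d : forall r k w p q h, r + d = 3 * n - 2 ->
  k = 3 * n - 1 - r -> w = 6 * n - 1 - r -> p = P0 + 4 * n + 2 + 2 * r ->
  written (4 * n + 2 + 2 * r) h ->
  exists h', steps W reduction_prog (10 * d + 7) 135 (regmem k w p (3 * n) q h) =
     Some (145, regmem 0 (3 * n + 1) E (3 * n) 1 h') /\ written (10 * n) h'.
Proof.
elim: d => [|d IH] r k w p q h rd -> -> -> wr.
  do 7 exec_step hW.
  eexists; split; first by rewrite steps0; congr (Some (_, regmem _ _ _ _ _ _)); lia.
  by move=> a ha; rewrite !updE wr //; rewrite /gadget_cell /gadget_edge; case_ifs; lia.
rewrite (_ : 10 * d.+1 + 7 = 10 + (10 * d + 7)) ?stepsD; last lia.
do 10 exec_step hW; rewrite steps0.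
apply: (IH r.+1); try lia.
by move=> a ha; rewrite !updE wr //; rewrite /gadget_cell /gadget_edge; case_ifs; lia.
Qed.

Lemma restore_spec s3 s4 h : s3 < n -> s4 < n ->
  h E = E + 3 -> h (E + 1) = s3 -> h (E + 2) = s4 -> h (E + 3) = 6 * n ->
  h (2 * E) = t + 4 -> h (2 * E + 3) = m + 5 * n ->
  steps W reduction_prog 11 145 (regmem 0 (3 * n + 1) E (3 * n) 1 h) =
    Some (156, regmem (6 * n) (m + 5 * n) (t + 4) s3 s4 h).
Proof.
(* Reads are at addresses that equal E + k only up to arithmetic. *)
have cell c v : h c = v -> forall e, e = c -> h e = v by move=> hc e ->.
move=> s3n s4n /cell h0 /cell h1 /cell h2 /cell h3 /cell h4 /cell h5.
do 11 exec_step_with hW ltac:(repeat match goal with |- context [h ?e] =>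
  first [ rewrite (h0 e); last lia | rewrite (h1 e); last lia | rewrite (h2 e); last lia
        | rewrite (h3 e); last lia | rewrite (h4 e); last lia | rewrite (h5 e); last lia ]
  end).
by rewrite steps0; congr (Some (_, regmem _ _ _ _ _ _)); lia.
Qed.

End MainCase.

Lemma single_vertex_spec W t s3 s4 h :
  (forall x, x <= 25 * (1 + 0 + t + 2) -> x <= W) ->
  exists M, steps W reduction_prog 15 0 (regmem 1 0 t s3 s4 h) = Some (171, M) /\
    decode_graph M = Graph 6 (gadget_edges 1) /\ decode_t M = t + 4.
Proof.
move=> hW; do 15 exec_step hW.
by eexists; split; [rewrite steps0 | split; rewrite /decode_graph /= ?updE].
Qed.

Lemma init_mem_regmem G t :
  init_mem G t = regmem (gn G) (gm G) t (init_mem G t 3) (init_mem G t 4) (init_mem G t).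
Proof. by apply: functional_extensionality => -[|[|[|[|[|a]]]]]. Qed.

Lemma init_mem_edge G t i : i < gm G ->
  init_mem G t (3 + 2 * i) = (nth (0, 0) (gE G) i).1 /\
  init_mem G t (4 + 2 * i) = (nth (0, 0) (gE G) i).2.
Proof.
move=> hi; rewrite /init_mem; decide_eqs.
rewrite (_ : 3 + 2 * i - 3 = false + i.*2); last by rewrite /=; lia.
rewrite (_ : 4 + 2 * i - 3 = true + i.*2); last by rewrite /=; lia.
by rewrite !half_bit_double hi /= odd_double.
Qed.

Lemma no_edges_single_vertex G : connected G -> gm G = 0 -> gn G = 1.
Proof.
move=> [n_gt0 conn] /size0nil noE; case: (leqP (gn G) 1) => [|n_gt1]; first lia.
have reach_eq k u v : reach G k u v = (u == v).
  elim: k u v => [|k IH] u v //=; rewrite IH (@eq_in_has _ _ pred0) ?has_pred0 ?orbF //.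
  by move=> w _; rewrite /adj noE andbF.
by have := conn 0 1 n_gt0 n_gt1; rewrite reach_eq.
Qed.

Lemma word_bound N x : 3 <= N -> x <= 25 * N -> x <= N ^ 200.
Proof.
move=> N3 xN; apply: leq_trans (leq_pexp2l _ (_ : 4 <= 200)); [| lia | by []].
have cube : 25 <= N ^ 3 by apply: (@leq_trans (3 ^ 3)); rewrite ?leq_exp2r.
by rewrite expnSr; apply: leq_trans xN (leq_mul cube (leqnn N)).
Qed.

Lemma decode_reduce G t h : 0 < gm G ->
  (forall a, 4 < a -> a < 3 + 2 * gm G + 10 * gn G ->
     h a = if 3 + 2 * gm G <= a then gadget_cell (gn G) (a - (3 + 2 * gm G))
           else init_mem G t a) ->
  decode_graph (regmem (6 * gn G) (gm G + 5 * gn G) (t + 4)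
                       (init_mem G t 3) (init_mem G t 4) h) = reduce G.
Proof.
move=> m_gt0 hE; rewrite /decode_graph /reduce; congr Graph.
rewrite iotaD map_cat; congr cat.
  rewrite -[RHS](mkseq_nth (0, 0)) /mkseq; apply/eq_in_map => i; rewrite mem_iota add0n => im.
  have [e1 e2] := init_mem_edge t im.
  transitivity (init_mem G t (3 + 2 * i), init_mem G t (4 + 2 * i)).
    have [-> | i_gt0] := posnP i; first by [].
    by rewrite !regmem_high ?hE ?ifN //; lia.
  by rewrite e1 e2; case: nth.
have -> : iota (0 + gm G) (5 * gn G) = map (addn (gm G)) (iota 0 (5 * gn G)).
  by rewrite -iotaDl addn0.
rewrite -map_comp; apply/eq_in_map => i; rewrite mem_iota add0n => i5n.
rewrite /comp !regmem_high ?hE ?ifT; try lia.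
have -> : 3 + 2 * (gm G + i) - (3 + 2 * gm G) = 2 * i by lia.
have -> : 4 + 2 * (gm G + i) - (3 + 2 * gm G) = 2 * i + 1 by lia.
by rewrite gadget_cell_even gadget_cell_odd; case: gadget_edge.
Qed.

Section Correctness.
Variables (G : graph) (t W : nat).
Hypothesis simpleG : simple_graph G.
Hypothesis connG : connected G.
Local Notation n := (gn G).
Local Notation m := (gm G).
Hypothesis hW : forall x, x <= 25 * (n + m + t + 2) -> x <= W.

Lemma first_edge_bounds : 0 < m ->
  [/\ init_mem G t 3 < n, init_mem G t 4 < n & init_mem G t 3 != init_mem G t 4].
Proof.
move=> m_gt0; have [e1 e2] : init_mem G t 3 = (nth (0, 0) (gE G) 0).1 /\
  init_mem G t 4 = (nth (0, 0) (gE G) 0).2 := init_mem_edge t m_gt0.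
by rewrite e1 e2; apply: (edge_bounds simpleG); rewrite -surjective_pairing mem_nth.
Qed.

Lemma main_case_correct : 0 < m -> exists M,
  steps W reduction_prog (112 + (15 * (n - 1) + 10 + (8 + (10 * (3 * n - 2) + 7 + 11)))) 0
    (init_mem G t) = Some (156, M) /\ decode_graph M = reduce G /\ decode_t M = t + 4.
Proof.
move=> m_gt0; have [s3n s4n s34] := first_edge_bounds m_gt0.
have n_ge2 : 2 <= n by lia.
have [hA [setup [below hE0 hE1 hE2 [hE3 h2E h2E3]]]] :=
  setup_spec hW n_ge2 m_gt0 (init_mem G t) s3n s4n.
have wr0 : written n m hA (4 * 0) hA by move=> a _; rewrite muln0 addn0 ltnNge andbN.
have [h1 [pendant wr1]] := pendant_loop_spec hW n_ge2 m_gt0 1 (d := n - 1) (r := 0)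
  ltac:(lia) erefl erefl erefl erefl wr0.
rewrite !subn0 muln0 addn0 in pendant.
have [h2 [hub wr2]] := hub_spec hW n_ge2 m_gt0 wr1.
have wr2' : written n m hA (4 * n + 2 + 2 * 0) h2 by rewrite muln0 addn0.
have [h3 [leaf wr3]] := leaf_loop_spec hW n_ge2 m_gt0 1 (d := 3 * n - 2) (r := 0)
  ltac:(lia) erefl erefl erefl wr2'.
rewrite !subn0 muln0 addn0 in leaf.
have keep a : 3 + 2 * m + 10 * n <= a -> h3 a = hA a by move=> Ea; rewrite wr3 ?ifN //; lia.
eexists; split.
  rewrite init_mem_regmem stepsD setup /= stepsD pendant /= stepsD hub /= stepsD leaf /=.
  by apply: (restore_spec hW n_ge2 m_gt0 s3n s4n); rewrite keep //; lia.
split=> //; apply: decode_reduce => // a a4 aE.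
by rewrite wr3 // below // aE andbT.
Qed.
End Correctness.

Lemma reduction_prog_correct G t : simple_graph G -> connected G ->
  exists M, run ((gn G + gm G + t + 2) ^ 200) reduction_prog (200 * (gn G + gm G + 1)) 0
              (init_mem G t) = Some M /\
            decode_graph M = reduce G /\ decode_t M = t + 4.
Proof.
move=> simpleG connG; have n_gt0 := gn_gt0 connG.
have hW x : x <= 25 * (gn G + gm G + t + 2) -> x <= (gn G + gm G + t + 2) ^ 200.
  by apply: word_bound; lia.
have [m0 | m_gt0] := posnP (gm G).
  have n1 := no_edges_single_vertex connG m0.
  rewrite init_mem_regmem; move: hW; rewrite n1 m0 => hW.
  have [M [st [decM tM]]] := single_vertex_spec (init_mem G t 3) (init_mem G t 4) (init_mem G t) hW.
  exists M; split; first by apply: (run_steps st); [vm_compute | lia].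
  by rewrite decM tM /reduce n1 (size0nil m0).
have [M [st decM]] := main_case_correct simpleG hW m_gt0.
by exists M; split=> //; apply: (run_steps st); [vm_compute | lia].
Qed.

Theorem theorem4 :
  exists (P : seq instr) (c : nat),
    forall (G : graph) (t : nat),
      simple_graph G -> connected G ->
      exists M : memory,
        run ((gn G + gm G + t + 2) ^ c) P (c * (gn G + gm G + 1)) 0 (init_mem G t)
          = Some M /\
        let G' := decode_graph M in
        let t' := decode_t M in
        [/\ simple_graph G', connected G',
            (t <= diameter G <-> t' <= diameter G'),
            gn G' + gm G' <= c * (gn G + gm G + 1)
          & bisection_width G' + min_degree G' <= 2].
Proof.
exists reduction_prog, 200 => G t simpleG connG.
have [M [runM [decM tM]]] := reduction_prog_correct t simpleG connG.
exists M; split=> //; rewrite decM tM /=; split.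
- exact: simple_reduce.
- exact: connected_reduce.
- by rewrite diameter_reduce // leq_add2r.
- by rewrite /gm size_cat size_gadget_edges; lia.
- by have := bisection_width_reduce simpleG connG; have := min_degree_reduce simpleG connG; lia.
Qed.
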